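(* Let $\lambda\in\mathbb{R}$, let $r\ge s\ge 1$ be integers and let $n\ge 1$ be an integer. Then \[ \phi_{n,\lambda}^{(r,s)}(x)=\frac{1}{e^{x}}\sum_{k=0}^{\infty}\frac{1}{k!}\bigg(\prod_{j=1}^{n}\big[(k+(j-1)(r-s))_s-(n-j)\lambda\big]\bigg)x^{k}. \] In particular, for $x=1$, \[ \phi_{n,\lambda}^{(r,s)}=\frac{1}{e}\sum_{k=0}^{\infty}\frac{1}{k!}\bigg(\prod_{j=1}^{n}\big[(k+(j-1)(r-s))_s-(n-j)\lambda\big]\bigg). \]
   Context: Notation: $(x)_0=1$, $(x)_m=x(x-1)\cdots(x-m+1)$ for $m\ge1$ (falling factorial). Let $D=\frac{d}{dx}$ and let $x$ also denote the operator of multiplication by $x$ (acting on polynomials/smooth functions). The generalized degenerate $(r,s)$-Stirling numbers of the second kind $S_\lambda^{(r,s)}(n,k)$, $0\le k\le ns$, are defined by the operator identity \[ \prod_{k=0}^{n-1}\Big(x^{r}D^{s}-k\lambda\, x^{r-s}\Big)=x^{n(r-s)}\sum_{k=0}^{ns}S_\lambda^{(r,s)}(n,k)\,x^{k}D^{k}, \] where the product of operators is written with the factors $k=0,1,\dots,n-1$ from left to right. The generalized degenerate $(r,s)$-Bell polynomials are $\phi_{n,\lambda}^{(r,s)}(x)=\sum_{k=0}^{ns}S_\lambda^{(r,s)}(n,k)x^k$, and $\phi_{n,\lambda}^{(r,s)}=\phi_{n,\lambda}^{(r,s)}(1)$. *)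

From HB Require Import structures.
From mathcomp Require Import all_boot all_order all_algebra.
From mathcomp Require Import all_classical all_reals all_analysis.
Set Implicit Arguments. Unset Strict Implicit. Unset Printing Implicit Defensive.
Import Order.TTheory GRing.Theory Num.Theory.
Local Open Scope ring_scope.

Definition stir_factor (R : realType) (r s : nat) (lam : R) (k : nat)
  (p : {poly R}) : {poly R} :=
  'X^r * p^`(s) - (k%:R * lam) *: ('X^(r - s) * p).

(* prod_{k=0}^{n-1} (x^r D^s - k lam x^(r-s)), factors k = 0..n-1 from left to
   right, applied to p:  A_0 (A_1 ( ... (A_{n-1} p))). *)
Definition stir_op (R : realType) (r s : nat) (lam : R) (n : nat)
  (p : {poly R}) : {poly R} :=
  foldr (fun k q => stir_factor r s lam k q) p (iota 0 n).

(* S : nat -> R are the generalized degenerate (r,s)-Stirling numbers of the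
   second kind S_lam^{(r,s)}(n,k), 0 <= k <= ns, i.e. they satisfy the defining
   operator identity (on all polynomials). *)
Definition is_gen_deg_stirling2 (R : realType) (r s : nat) (lam : R) (n : nat)
  (S : nat -> R) : Prop :=
  forall p : {poly R},
    stir_op r s lam n p =
    'X^(n * (r - s)) * \sum_(0 <= k < (n * s).+1) S k *: ('X^k * p^`(k)).

Definition gen_deg_bell (R : realType) (n s : nat) (S : nat -> R) (x : R) : R :=
  \sum_(0 <= k < (n * s).+1) S k * x ^+ k.

Definition bell_series_coef (R : realType) (r s : nat) (lam : R) (n k : nat) : R :=
  (k`!%:R)^-1 *
  \prod_(1 <= j < n.+1) (((k + (j - 1) * (r - s)) ^_ s)%:R - (n - j)%:R * lam).

From mathcomp Require Import all_boot all_order all_algebra.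
From mathcomp Require Import all_classical all_reals all_analysis.
From mathcomp Require Import ring.
Import Order.TTheory GRing.Theory Num.Theory.
Import numFieldNormedType.Exports.
Set Implicit Arguments. Unset Strict Implicit.
Local Open Scope classical_set_scope.
Local Open Scope ring_scope.

(* Each factor x^r D^s - k lam x^(r-s) maps x^m to ((m)_s - k lam) x^(m+r-s), so the
   operator product maps x^k to c_n(k) x^(k+n(r-s)), where c_n(k) is the product in
   the statement.  Applying the defining identity of S(n,j) to x^k instead gives
   x^(n(r-s)) sum_j S(n,j) (k)_j x^k, hence c_n(k) = sum_j S(n,j) (k)_j.  Since
   sum_k (k)_j x^k / k! = x^j e^x, the series sum_k c_n(k) x^k / k! is the finite
   combination sum_j S(n,j) x^j e^x = e^x phi_n(x). *)

Lemma mulXn_derivnXn (R : nzRingType) (r s k : nat) : (s <= r)%N ->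
  'X^r * ('X^k)^`(s) = (k ^_ s)%:R *: ('X^(k + (r - s)) : {poly R}).
Proof.
move=> le_sr; rewrite derivnXn mulrnAr scaler_nat; case: (leqP s k) => [le_sk|lt_ks].
  by rewrite -exprD addnBA // addnC -addnBA.
by rewrite ffact_small // !mulr0n.
Qed.

Section StirlingOperator.
Variables (R : realType) (r s : nat) (lam : R).
Hypothesis le_sr : (s <= r)%N.

Lemma stir_factorZ k c p :
  stir_factor r s lam k (c *: p) = c *: stir_factor r s lam k p.
Proof.
by rewrite /stir_factor derivnZ scalerBr -!scalerAr !scalerA [c * _]mulrC.
Qed.

Lemma stir_opZ n c p : stir_op r s lam n (c *: p) = c *: stir_op r s lam n p.
Proof. by rewrite /stir_op; elim: (iota 0 n) => //= k l ->; rewrite stir_factorZ. Qed.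

Lemma stir_opSr n p :
  stir_op r s lam n.+1 p = stir_op r s lam n (stir_factor r s lam n p).
Proof. by rewrite /stir_op -addn1 iotaD foldr_cat. Qed.

Definition stir_mono_coef (n k : nat) : R :=
  \prod_(1 <= j < n.+1) (((k + (j - 1) * (r - s)) ^_ s)%:R - (n - j)%:R * lam).

Lemma stir_mono_coefSl n k : stir_mono_coef n.+1 k =
  ((k ^_ s)%:R - n%:R * lam) * stir_mono_coef n (k + (r - s)).
Proof.
rewrite /stir_mono_coef big_nat_recl //= mul0n addn0 subn1.
congr (_ * _); apply: eq_big_nat => j /andP[j_gt0 _].
by rewrite !subn1 subSS -addnA -mulSn prednK.
Qed.

Lemma stir_opXn n k :
  stir_op r s lam n 'X^k = stir_mono_coef n k *: 'X^(k + n * (r - s)).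
Proof.
elim: n k => [|n IHn] k.
  by rewrite /stir_mono_coef big_geq // scale1r addn0.
rewrite stir_opSr /stir_factor mulXn_derivnXn // -exprD [(r - s + k)%N]addnC.
rewrite -scalerBl stir_opZ IHn scalerA -stir_mono_coefSl.
by rewrite mulSn addnA.
Qed.

Lemma stir_mono_coef_stirling n (S : nat -> R) k :
  is_gen_deg_stirling2 r s lam n S ->
  stir_mono_coef n k = \sum_(0 <= j < (n * s).+1) S j * (k ^_ j)%:R.
Proof.
move=> /(_ 'X^k); rewrite stir_opXn.
under eq_bigr do rewrite mulXn_derivnXn // subnn addn0 scalerA.
rewrite -scaler_suml -scalerAr -exprD [(_ + k)%N]addnC.
move/(congr1 (fun p : {poly R} => p`_(k + n * (r - s)))).
by rewrite !coefZ !coefXn eqxx !mulr1.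
Qed.

End StirlingOperator.

Section FallingFactorialExpSeries.
Variable R : realType.

(* (k)_j / k! vanishes for k < j and equals 1 / (k - j)! otherwise. *)
Lemma sum_ffact_exp_coeff_shift (x : R) j N :
  \sum_(0 <= k < N + j) (k`!%:R)^-1 * (k ^_ j)%:R * x ^+ k =
  x ^+ j * series (exp_coeff x) N.
Proof.
rewrite (@big_cat_nat _ _ _ j) ?leq_addl //= big_nat_cond big1 ?add0r; last first.
  by move=> k /andP[/andP[_ lt_kj] _]; rewrite ffact_small // mulr0 mul0r.
rewrite -{1}[j]add0n big_addn addnK /series /= mulr_sumr.
apply: eq_bigr => k _; rewrite /exp_coeff /= exprD.
have k_fact : ((k + j) ^_ j * k`! = (k + j)`!)%N.
  by rewrite -{2}[k](addnK j) ffact_fact ?leq_addl.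
rewrite -k_fact natrM invfM.
have ffact_neq0 : ((k + j) ^_ j)%:R != 0 :> R.
  by rewrite pnatr_eq0 -lt0n ffact_gt0 leq_addl.
have fact_neq0 : (k`!)%:R != 0 :> R by rewrite pnatr_eq0 -lt0n fact_gt0.
by field; rewrite ffact_neq0 fact_neq0.
Qed.

Lemma cvg_series_ffact_exp (x : R) j :
  (fun N => \sum_(0 <= k < N) (k`!%:R)^-1 * (k ^_ j)%:R * x ^+ k) @ \oo -->
  x ^+ j * expR x.
Proof.
rewrite -(cvg_shiftn j).
under eq_cvg do rewrite /= sum_ffact_exp_coeff_shift.
apply: cvgMl_tmp; exact: is_cvg_series_exp_coeff.
Qed.

End FallingFactorialExpSeries.

Theorem theorem1 (R : realType) (lam : R) (r s n : nat)
  (hs : (1 <= s)%N) (hsr : (s <= r)%N) (hn : (1 <= n)%N)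
  (S : nat -> R) (hS : is_gen_deg_stirling2 r s lam n S) (x : R) :
  cvgn (fun N => \sum_(0 <= k < N) bell_series_coef r s lam n k * x ^+ k) /\
  gen_deg_bell n s S x =
    (expR x)^-1 * limn (fun N => \sum_(0 <= k < N) bell_series_coef r s lam n k * x ^+ k).
Proof.
set u := fun N => _.
have u_ffact : u = fun N => \sum_(0 <= j < (n * s).+1)
    S j * \sum_(0 <= k < N) (k`!%:R)^-1 * (k ^_ j)%:R * x ^+ k.
  apply/funext => N; under [RHS]eq_bigr do rewrite mulr_sumr.
  rewrite /u exchange_big /=; apply: eq_bigr => k _.
  have -> : bell_series_coef r s lam n k =
      (k`!%:R)^-1 * stir_mono_coef r s lam n k by [].
  rewrite (stir_mono_coef_stirling hsr _ hS) mulr_sumr mulr_suml.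
  by apply: eq_bigr => j _; ring.
have u_cvg : u @ \oo --> \sum_(0 <= j < (n * s).+1) S j * (x ^+ j * expR x).
  rewrite u_ffact; apply: (cvg_big add_continuous) => // j _.
  by apply: cvgMl_tmp; exact: cvg_series_ffact_exp.
split; first exact: cvgP u_cvg.
rewrite (cvg_lim _ u_cvg) // /gen_deg_bell mulr_sumr; apply: eq_bigr => j _.
have expR_neq0 : expR x != 0 by rewrite gt_eqF ?expR_gt0.
by field.
Qed.
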